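(* Let $(H,\leq,\ast)$ be a discrete $\omega$-dimensional poc-set and let $A$ be a maximal transverse subset of $H$. Then $$\pi_A=\{h\in H:\exists a\in A,\ a\leq h\}\cup\{h\in H:\exists a\in A,\ a^\ast<h\}$$ is a principal ultrafilter on $H$. Moreover, every principal ultrafilter on $H$ is of this form.
   Context: A poc-set $(H,\leq,\ast)$ is a poset with minimum $0$ and an order-reversing involution $h\mapsto h^\ast$ such that $h\leq h^\ast$ implies $h=0$; $0,0^\ast$ are trivial, others proper. Discrete: for proper $a,b$ the interval $\{h:a\le h\le b\}$ is finite. $h,k$ are nested if one of $h\le k$, $h^\ast\le k$, $h\le k^\ast$, $h^\ast\le k^\ast$ holds, transverse otherwise; a set is transverse if its elements are pairwise transverse. $\omega$-dimensional: no infinite transverse subset. An ultrafilter is $\alpha\subseteq H$ such that for each $h$ exactly one of $h,h^\ast$ lies in $\alpha$, and no $h,k\in\alpha$ satisfy $h\le k^\ast$. An ultrafilter is principal if every descending chain $h_1\ge h_2\ge\cdots$ of its elements is eventually constant. *)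

From Stdlib Require Import List.

Record PocSet := {
  carrier :> Type;
  le : carrier -> carrier -> Prop;
  zero : carrier;
  star : carrier -> carrier;
  le_refl : forall h, le h h;
  le_antisym : forall h k, le h k -> le k h -> h = k;
  le_trans : forall h k l, le h k -> le k l -> le h l;
  zero_min : forall h, le zero h;
  star_rev : forall h k, le h k -> le (star k) (star h);
  star_invol : forall h, star (star h) = h;
  star_poc : forall h, le h (star h) -> h = zero
}.

Section Defs.
Variable H : PocSet.

Definition lt (h k : H) : Prop := le H h k /\ h <> k.

Definition trivial (h : H) : Prop := h = zero H \/ h = star H (zero H).
Definition proper (h : H) : Prop := ~ trivial h.

Definition finite_set (P : H -> Prop) : Prop :=
  exists l : list H, forall h, P h -> In h l.

Definition discrete : Prop :=
  forall a b : H, proper a -> proper b ->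
    finite_set (fun h => le H a h /\ le H h b).

Definition nested (h k : H) : Prop :=
  le H h k \/ le H (star H h) k \/ le H h (star H k) \/
  le H (star H h) (star H k).

Definition transverse (h k : H) : Prop := ~ nested h k.

Definition transverse_set (A : H -> Prop) : Prop :=
  forall h k, A h -> A k -> h <> k -> transverse h k.

Definition omega_dimensional : Prop :=
  forall A : H -> Prop, transverse_set A -> finite_set A.

Definition maximal_transverse (A : H -> Prop) : Prop :=
  (forall h, A h -> proper h) /\ transverse_set A /\
  forall B : H -> Prop,
    (forall h, B h -> proper h) -> transverse_set B ->
    (forall h, A h -> B h) -> forall h, B h -> A h.

Definition ultrafilter (alpha : H -> Prop) : Prop :=
  (forall h, (alpha h /\ ~ alpha (star H h)) \/ (~ alpha h /\ alpha (star H h))) /\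
  (forall h k, alpha h -> alpha k -> ~ le H h (star H k)).

Definition principal (alpha : H -> Prop) : Prop :=
  forall f : nat -> H,
    (forall n, alpha (f n)) -> (forall n, le H (f (S n)) (f n)) ->
    exists N, forall n, N <= n -> f n = f N.

Definition pi_set (A : H -> Prop) : H -> Prop :=
  fun h => (exists a, A a /\ le H a h) \/ (exists a, A a /\ lt (star H a) h).

End Defs.

From Stdlib Require Import List Lia Classical ClassicalEpsilon ChoiceFacts.

(* A proper h is nested with some a in A, and each of the four
   ways of being nested puts h or h* above a or strictly above a*; so pi_A is total, while
   transversality of A forbids h <= k* inside pi_A. Every element of pi_A lies above one of
   the finitely many elements of A and A*, so a descending chain in pi_A has a common lower
   bound among them, and discreteness traps its tail in a finite interval.
   Conversely, in a principal ultrafilter alpha every element lies above a minimal one. A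
   maximal transverse family A of minimal elements exists by omega-dimensionality, and two
   distinct nested minimal elements m, a satisfy a* <= m. Hence A is maximal transverse in H
   and alpha is contained in pi_A; an ultrafilter contained in another one equals it. *)

Lemma dependent_choice_on (T : Type) (Q : T -> Prop) (R : T -> T -> Prop) (x0 : T) :
  Q x0 -> (forall x, Q x -> exists y, Q y /\ R x y) ->
  exists f : nat -> T, f 0 = x0 /\ forall n, Q (f n) /\ R (f n) (f (S n)).
Proof.
  intros Qx0 step.
  destruct (functional_choice_imp_functional_dependent_choice choice
              (fun x y => Q x -> Q y /\ R x y)) with (x0 := x0) as [f [f0 fS]].
  - intros x. destruct (classic (Q x)) as [Qx | nQx].
    + destruct (step x Qx) as [y Hy]. exists y. tauto.
    + exists x. tauto.
  - assert (Qf : forall n, Q (f n)).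
    { induction n as [|n IH]; [rewrite f0; exact Qx0 | exact (proj1 (fS n IH))]. }
    exists f. split; [exact f0 |]. intros n. exact (conj (Qf n) (proj2 (fS n (Qf n)))).
Qed.

Section PocSetBasics.
Variable H : PocSet.

Lemma le_star_l (h k : H) : le H (star H h) k -> le H (star H k) h.
Proof. intros E. rewrite <- (star_invol H h). now apply star_rev. Qed.

Lemma le_star_r (h k : H) : le H h (star H k) -> le H k (star H h).
Proof. intros E. rewrite <- (star_invol H k) at 1. now apply star_rev. Qed.

Lemma star_le_star (h k : H) : le H (star H h) (star H k) -> le H k h.
Proof. intros E. rewrite <- (star_invol H h), <- (star_invol H k). now apply star_rev. Qed.

Lemma star_inj (h k : H) : star H h = star H k -> h = k.
Proof. intros E. now rewrite <- (star_invol H h), <- (star_invol H k), E. Qed.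

Lemma le_star_zero (h : H) : le H h (star H (zero H)).
Proof. apply le_star_r, zero_min. Qed.

Lemma star_le_self (h : H) : le H (star H h) h -> h = star H (zero H).
Proof.
  intros E. apply star_inj. rewrite star_invol.
  apply star_poc. now rewrite star_invol.
Qed.

Lemma proper_star (h : H) : proper H h -> proper H (star H h).
Proof.
  intros Ph [E | E]; apply Ph.
  - right. now rewrite <- E, star_invol.
  - left. now apply star_inj.
Qed.

Lemma nested_refl (h : H) : nested H h h.
Proof. left. apply le_refl. Qed.

Lemma nested_sym (h k : H) : nested H h k -> nested H k h.
Proof.
  intros [E | [E | [E | E]]].
  - right; right; right. now apply star_rev.
  - right; left. now apply le_star_l.
  - right; right; left. now apply le_star_r.
  - left. now apply star_le_star.
Qed.

Lemma nested_star_l (h k : H) : nested H (star H h) k -> nested H h k.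
Proof. unfold nested. rewrite star_invol. tauto. Qed.

Lemma le_nested (a h : H) : le H a h -> nested H h a.
Proof. intros E. right; right; right. now apply star_rev. Qed.

Lemma star_le_nested (a h : H) : le H (star H a) h -> nested H h a.
Proof. intros E. right; left. now apply le_star_l. Qed.

Lemma transverse_set_add (A : H -> Prop) (h : H) :
  transverse_set H A -> (forall a, A a -> ~ nested H h a) ->
  transverse_set H (fun x => h = x \/ A x).
Proof.
  intros At Ah x y [<- | Ax] [<- | Ay] neq.
  - now contradiction neq.
  - exact (Ah y Ay).
  - intros N. exact (Ah x Ax (nested_sym _ _ N)).
  - exact (At x y Ax Ay neq).
Qed.

Lemma finite_set_enum (P : H -> Prop) :
  finite_set H P -> exists l, forall h, In h l <-> P h.
Proof.
  intros [l Hl]. revert P Hl. induction l as [|y l IH]; intros P Hl.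
  - exists nil. intros h. split; [intros [] | exact (Hl h)].
  - destruct (IH (fun h => P h /\ h <> y)) as [l' Hl'].
    { intros h [Ph Nh]. destruct (Hl h Ph) as [<- | Hh]; [contradiction | exact Hh]. }
    destruct (classic (P y)) as [Py | Ny].
    + exists (y :: l'). intros h. simpl. rewrite Hl'. split.
      * intros [<- | [Ph _]]; assumption.
      * intros Ph. destruct (classic (y = h)); [left | right]; auto.
    + exists l'. intros h. rewrite Hl'. split; [tauto |].
      intros Ph. split; [exact Ph | intros ->; contradiction].
Qed.

End PocSetBasics.

Section DescendingChains.
Variable H : PocSet.

Definition descending (f : nat -> H) : Prop := forall n, le H (f (S n)) (f n).

Lemma descending_le (f : nat -> H) n m : descending f -> n <= m -> le H (f m) (f n).
Proof.
  intros Hf Hnm. induction Hnm as [|m _ IH]; [apply le_refl |].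
  exact (le_trans H _ _ _ (Hf m) IH).
Qed.

Lemma descending_common_lower_bound (l : list H) (f : nat -> H) :
  descending f -> (forall n, exists b, In b l /\ le H b (f n)) ->
  exists b, In b l /\ forall n, le H b (f n).
Proof.
  revert f. induction l as [|y l IH]; intros f Hf Hb.
  - now destruct (Hb 0) as [b [[] _]].
  - destruct (classic (forall n, le H y (f n))) as [Hy | Hy].
    { exists y. split; [now left | exact Hy]. }
    apply not_all_ex_not in Hy as [N HN].
    destruct (IH (fun n => f (n + N))) as [b [Hbl Hbf]].
    + intros n. exact (Hf (n + N)).
    + intros n. destruct (Hb (n + N)) as [b [[<- | Hbl] Hbf]].
      * contradiction HN. apply (le_trans H _ _ _ Hbf), descending_le; [exact Hf | lia].
      * now exists b.
    + exists b. split; [now right |]. intros n.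
      apply (le_trans H _ _ _ (Hbf n)), descending_le; [exact Hf | lia].
Qed.

Lemma descending_stationary_in (l : list H) (f : nat -> H) (N : nat) :
  descending f -> (forall n, N <= n -> In (f n) l) ->
  exists M, forall n, M <= n -> f n = f M.
Proof.
  intros Hf. revert N. induction l as [|y l IH]; intros N Hl.
  - destruct (Hl N (le_n N)).
  - destruct (classic (forall M, exists n, M <= n /\ f n = y)) as [Hinf | Hfin].
    + destruct (Hinf 0) as [n0 [_ E0]]. exists n0. intros n Hn.
      destruct (Hinf n) as [m [Hm Em]].
      apply (le_antisym H); [now apply descending_le |].
      rewrite E0, <- Em. now apply descending_le.
    + apply not_all_ex_not in Hfin as [M0 HM0].
      apply (IH (max N M0)). intros n Hn.
      destruct (Hl n ltac:(lia)) as [E | E]; [| exact E].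
      contradiction HM0. exists n. split; [lia | now symmetry].
Qed.

(* A descending chain has a common lower bound b in the base; once the chain leaves the top
   element 0*, its tail lies in the finite interval between b and a proper element. *)
Lemma principal_of_finite_base (alpha : H -> Prop) (B : list H) :
  discrete H -> ~ alpha (zero H) -> (forall b, In b B -> proper H b) ->
  (forall h, alpha h -> exists b, In b B /\ le H b h) -> principal H alpha.
Proof.
  intros Hd Hz HB Hbase f Hf Hdesc.
  destruct (descending_common_lower_bound B f Hdesc (fun n => Hbase (f n) (Hf n)))
    as [b [Hb Hbf]].
  destruct (classic (exists N, f N <> star H (zero H))) as [[N HN] | Htop].
  - assert (PN : proper H (f N)).
    { intros [E | E]; [apply Hz; rewrite <- E; apply Hf | exact (HN E)]. }
    destruct (Hd b (f N) (HB b Hb) PN) as [L HL].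
    apply (descending_stationary_in L f N Hdesc). intros n Hn.
    apply HL. split; [apply Hbf | now apply descending_le].
  - exists 0. intros n _.
    assert (top : forall m, f m = star H (zero H)).
    { intros m. apply NNPP. intros Hm. apply Htop. now exists m. }
    now rewrite !top.
Qed.

End DescendingChains.

Section TransverseProperSet.
Variable H : PocSet.
Variable A : H -> Prop.
Hypothesis A_proper : forall a, A a -> proper H a.
Hypothesis A_transverse : transverse_set H A.

Lemma transverse_le_eq (a1 a2 : H) : A a1 -> A a2 -> le H a1 a2 -> a1 = a2.
Proof.
  intros A1 A2 E. apply NNPP. intros neq.
  apply (A_transverse a1 a2 A1 A2 neq). now left.
Qed.

Lemma transverse_not_le_star (a1 a2 : H) : A a1 -> A a2 -> ~ le H a1 (star H a2).
Proof.
  intros A1 A2 E. destruct (classic (a1 = a2)) as [<- | neq].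
  - apply (A_proper a1 A1). left. now apply star_poc.
  - apply (A_transverse a1 a2 A1 A2 neq). now right; right; left.
Qed.

Lemma transverse_not_star_le (a1 a2 : H) : A a1 -> A a2 -> ~ le H (star H a1) a2.
Proof.
  intros A1 A2 E. destruct (classic (a1 = a2)) as [<- | neq].
  - apply (A_proper a1 A1). right. now apply star_le_self.
  - apply (A_transverse a1 a2 A1 A2 neq). now right; left.
Qed.

Lemma pi_set_not_zero : ~ pi_set H A (zero H).
Proof.
  intros [[a [Aa E]] | [a [Aa [E N]]]].
  - apply (A_proper a Aa). left. exact (le_antisym H _ _ E (zero_min H a)).
  - exact (N (le_antisym H _ _ E (zero_min H _))).
Qed.

Lemma pi_set_consistent (h k : H) : pi_set H A h -> pi_set H A k -> ~ le H h (star H k).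
Proof.
  assert (mixed : forall h k a1 a2, A a1 -> A a2 -> le H a1 h -> lt H (star H a2) k ->
                    ~ le H h (star H k)).
  { intros h' k' a1 a2 A1 A2 E1 [E2 N2] E.
    assert (F1 : le H a1 (star H k')) by exact (le_trans H _ _ _ E1 E).
    assert (F2 : le H (star H k') a2) by now apply le_star_l.
    pose proof (transverse_le_eq a1 a2 A1 A2 (le_trans H _ _ _ F1 F2)) as <-.
    apply N2. rewrite <- (le_antisym H _ _ F2 F1). apply star_invol. }
  intros [[a1 [A1 E1]] | [a1 [A1 E1]]] [[a2 [A2 E2]] | [a2 [A2 E2]]] E.
  - apply (transverse_not_le_star a1 a2 A1 A2).
    apply (le_trans H _ _ _ E1), (le_trans H _ _ _ E). now apply star_rev.
  - exact (mixed h k a1 a2 A1 A2 E1 E2 E).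
  - exact (mixed k h a2 a1 A2 A1 E2 E1 (le_star_r _ _ _ E)).
  - apply (transverse_not_star_le a1 a2 A1 A2).
    apply (le_trans H _ _ _ (proj1 E1)), (le_trans H _ _ _ E). now apply le_star_l, E2.
Qed.

Lemma pi_set_principal : discrete H -> omega_dimensional H -> principal H (pi_set H A).
Proof.
  intros Hd Ho. destruct (finite_set_enum H A (Ho A A_transverse)) as [LA HLA].
  apply (principal_of_finite_base H _ (LA ++ map (star H) LA) Hd pi_set_not_zero).
  - intros b Hb. apply in_app_or in Hb as [Hb | Hb].
    + now apply A_proper, HLA.
    + apply in_map_iff in Hb as [a [<- Ha]]. now apply proper_star, A_proper, HLA.
  - intros h [[a [Aa E]] | [a [Aa [E _]]]].
    + exists a. split; [apply in_or_app; left; now apply HLA | exact E].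
    + exists (star H a). split; [apply in_or_app; right; now apply in_map, HLA | exact E].
Qed.

End TransverseProperSet.

Section MaximalTransverse.
Variable H : PocSet.
Variable A : H -> Prop.
Hypothesis A_maximal : maximal_transverse H A.
Hypothesis H_nontrivial : exists p : H, proper H p.

Lemma maximal_transverse_nested (h : H) : proper H h -> exists a, A a /\ nested H h a.
Proof.
  destruct A_maximal as [Ap [At Amax]]. intros Ph. apply NNPP. intros none.
  assert (Ah : A h).
  { apply (Amax (fun x => h = x \/ A x)).
    - now intros x [<- | Ax]; auto.
    - apply transverse_set_add; [exact At |]. intros a Aa N. apply none. now exists a.
    - now right.
    - now left. }
  apply none. exists h. split; [exact Ah | apply nested_refl].
Qed.

Lemma pi_set_star_le (a h : H) :
  A a -> le H (star H a) h -> pi_set H A h \/ pi_set H A (star H h).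
Proof.
  intros Aa E. destruct (classic (star H a = h)) as [<- | neq].
  - right. left. exists a. rewrite star_invol. split; [exact Aa | apply le_refl].
  - left. right. exists a. now repeat split.
Qed.

Lemma pi_set_total (h : H) : pi_set H A h \/ pi_set H A (star H h).
Proof.
  destruct (classic (proper H h)) as [Ph | Th].
  - destruct (maximal_transverse_nested h Ph) as [a [Aa [E | [E | [E | E]]]]].
    + pose proof (pi_set_star_le a (star H h) Aa (star_rev H _ _ E)) as P.
      rewrite star_invol in P. tauto.
    + exact (pi_set_star_le a h Aa (le_star_l H _ _ E)).
    + right. left. exists a. split; [exact Aa | now apply le_star_r].
    + left. left. exists a. split; [exact Aa | now apply star_le_star].
  - destruct H_nontrivial as [p Pp].
    destruct (maximal_transverse_nested p Pp) as [a [Aa _]].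
    apply NNPP in Th as [-> | ->].
    + right. left. exists a. split; [exact Aa | apply le_star_zero].
    + left. left. exists a. split; [exact Aa | apply le_star_zero].
Qed.

Lemma pi_set_ultrafilter : ultrafilter H (pi_set H A).
Proof.
  destruct A_maximal as [Ap [At _]].
  assert (self : forall h, pi_set H A h -> pi_set H A (star H h) -> False).
  { intros h P Q. apply (pi_set_consistent H A Ap At h (star H h) P Q).
    rewrite star_invol. apply le_refl. }
  split; [| exact (pi_set_consistent H A Ap At)].
  intros h. destruct (pi_set_total h) as [P | P].
  - left. split; [exact P | intros Q; exact (self h P Q)].
  - right. split; [intros Q; exact (self h Q P) | exact P].
Qed.

End MaximalTransverse.

Section Ultrafilters.
Variable H : PocSet.

Lemma ultrafilter_not_both (alpha : H -> Prop) (h : H) :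
  ultrafilter H alpha -> alpha h -> alpha (star H h) -> False.
Proof.
  intros [_ Hc] A1 A2. apply (Hc _ _ A1 A2). rewrite star_invol. apply le_refl.
Qed.

Lemma ultrafilter_incl_eq (alpha beta : H -> Prop) :
  ultrafilter H alpha -> ultrafilter H beta -> (forall h, alpha h -> beta h) ->
  forall h, alpha h <-> beta h.
Proof.
  intros [Ha _] Hb incl h. split; [apply incl |]. intros Bh.
  destruct (Ha h) as [[Ah _] | [_ Ash]]; [exact Ah |].
  exfalso. exact (ultrafilter_not_both beta h Hb Bh (incl _ Ash)).
Qed.

Definition minimal (alpha : H -> Prop) (m : H) : Prop :=
  alpha m /\ forall y, alpha y -> le H y m -> y = m.

Lemma principal_minimal_below (alpha : H -> Prop) (x : H) :
  principal H alpha -> alpha x -> exists m, minimal alpha m /\ le H m x.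
Proof.
  intros Hpr Ax. apply NNPP. intros Hno.
  set (Q := fun y => alpha y /\ ~ exists m, minimal alpha m /\ le H m y).
  destruct (dependent_choice_on H Q (fun y z => le H z y /\ z <> y) x) as [f [_ Hf]].
  - split; assumption.
  - intros y [Ay Hy].
    assert (Nmin : ~ minimal alpha y).
    { intros My. apply Hy. exists y. split; [exact My | apply le_refl]. }
    apply not_and_or in Nmin as [NAy | Nmin]; [contradiction |].
    apply not_all_ex_not in Nmin as [z Hz].
    apply imply_to_and in Hz as [Az Hz]. apply imply_to_and in Hz as [Ezy Nzy].
    exists z. repeat split; try assumption.
    intros [m [Mm Emz]]. apply Hy. exists m. split; [exact Mm | exact (le_trans H _ _ _ Emz Ezy)].
  - destruct (Hpr f) as [N HN].
    + intros n. exact (proj1 (proj1 (Hf n))).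
    + intros n. exact (proj1 (proj2 (Hf n))).
    + apply (proj2 (proj2 (Hf N))). apply HN. lia.
Qed.

Lemma minimal_proper (alpha : H -> Prop) (m : H) :
  ultrafilter H alpha -> (exists p : H, proper H p) -> minimal alpha m -> proper H m.
Proof.
  intros [Hu Hc] [p Pp] [Am Mm] [-> | ->].
  - exact (Hc _ _ Am Am (zero_min H _)).
  - destruct (Hu p) as [[Ap _] | [_ Ap]].
    + apply Pp. right. exact (Mm p Ap (le_star_zero H p)).
    + apply (proper_star H p Pp). right. exact (Mm _ Ap (le_star_zero H _)).
Qed.

Lemma minimal_nested (alpha : H -> Prop) (m a : H) :
  ultrafilter H alpha -> minimal alpha m -> minimal alpha a -> nested H m a ->
  m = a \/ le H (star H a) m.
Proof.
  intros [_ Hc] [Am Mm] [Aa Ma] [E | [E | [E | E]]].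
  - left. exact (Ma m Am E).
  - right. now apply le_star_l.
  - contradiction (Hc m a Am Aa E).
  - left. symmetry. exact (Mm a Aa (star_le_star H _ _ E)).
Qed.

Lemma exists_maximal_transverse_list (P : H -> Prop) :
  omega_dimensional H ->
  exists l, (forall x, In x l -> P x) /\ transverse_set H (fun x => In x l) /\
    forall m, P m -> exists a, In a l /\ nested H m a.
Proof.
  intros Ho. apply NNPP. intros Hno.
  set (Q := fun l => NoDup l /\ (forall x, In x l -> P x) /\ transverse_set H (fun x => In x l)).
  destruct (dependent_choice_on _ Q
              (fun l l' => incl l l' /\ length l' = S (length l)) nil) as [f [f0 Hf]].
  - split; [constructor | split; [intros x [] | intros x y []]].
  - intros l [Nd [Pl Tl]].
    assert (Hm : exists m, P m /\ forall a, In a l -> ~ nested H m a).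
    { apply NNPP. intros Hm. apply Hno. exists l. repeat split; try assumption.
      intros m Pm. apply NNPP. intros Ha. apply Hm. exists m. split; [exact Pm |].
      intros a Ina N. apply Ha. now exists a. }
    destruct Hm as [m [Pm Hm]].
    assert (Nm : ~ In m l) by (intros Inm; exact (Hm m Inm (nested_refl H m))).
    exists (m :: l). repeat split.
    + now constructor.
    + intros x [<- | Inx]; auto.
    + exact (transverse_set_add H _ m Tl Hm).
    + intros x Inx. now right.
  - assert (len : forall n, length (f n) = n).
    { induction n as [|n IH]; [now rewrite f0 | now rewrite (proj2 (proj2 (Hf n))), IH]. }
    assert (mono : forall n m, n <= m -> incl (f n) (f m)).
    { intros n m Hnm. induction Hnm as [|m _ IH]; [apply incl_refl |].
      exact (incl_tran IH (proj1 (proj2 (Hf m)))). }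
    destruct (Ho (fun x => exists n, In x (f n))) as [K HK].
    + intros x y [n Hx] [m Hy]. apply (proj2 (proj2 (proj1 (Hf (n + m))))).
      * apply (mono n); [lia | exact Hx].
      * apply (mono m); [lia | exact Hy].
    + pose proof (@NoDup_incl_length _ _ K (proj1 (proj1 (Hf (S (length K)))))) as Hl.
      rewrite len in Hl.
      enough (S (length K) <= length K) by lia.
      apply Hl. intros x Hx. apply HK. now exists (S (length K)).
Qed.

End Ultrafilters.

Section PrincipalUltrafilter.
Variable H : PocSet.
Variable alpha : H -> Prop.
Hypothesis alpha_ultrafilter : ultrafilter H alpha.
Hypothesis alpha_principal : principal H alpha.
Variable LA : list H.
Hypothesis LA_minimal : forall a, In a LA -> minimal H alpha a.
Hypothesis LA_transverse : transverse_set H (fun a => In a LA).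
Hypothesis LA_maximal : forall m, minimal H alpha m -> exists a, In a LA /\ nested H m a.

Lemma minimal_family_below (x : H) :
  alpha x -> exists a, In a LA /\ (le H a x \/ le H (star H a) x).
Proof.
  intros Ax. destruct (principal_minimal_below H alpha x alpha_principal Ax) as [m [Mm Emx]].
  destruct (LA_maximal m Mm) as [a [Ha Nma]]. exists a. split; [exact Ha |].
  destruct (minimal_nested H alpha m a alpha_ultrafilter Mm (LA_minimal a Ha) Nma)
    as [<- | E].
  - now left.
  - right. exact (le_trans H _ _ _ E Emx).
Qed.

Lemma minimal_family_maximal_transverse :
  (exists p : H, proper H p) -> maximal_transverse H (fun a => In a LA).
Proof.
  intros Hne. split; [| split; [exact LA_transverse |]].
  { intros a Ha. exact (minimal_proper H alpha a alpha_ultrafilter Hne (LA_minimal a Ha)). }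
  intros B _ Bt BA h Bh. apply NNPP. intros Nh.
  assert (far : forall a, In a LA -> ~ nested H h a).
  { intros a Ha. apply Bt; [exact Bh | now apply BA | now intros ->]. }
  assert (near : forall x, alpha x -> exists a, In a LA /\ nested H x a).
  { intros x Ax. destruct (minimal_family_below x Ax) as [a [Ha [E | E]]];
      exists a; split; auto using le_nested, star_le_nested. }
  destruct (proj1 alpha_ultrafilter h) as [[Ah _] | [_ Ash]].
  - destruct (near h Ah) as [a [Ha N]]. exact (far a Ha N).
  - destruct (near _ Ash) as [a [Ha N]]. exact (far a Ha (nested_star_l H _ _ N)).
Qed.

Lemma principal_ultrafilter_sub_pi_set (h : H) : alpha h -> pi_set H (fun a => In a LA) h.
Proof.
  intros Ah. destruct (minimal_family_below h Ah) as [a [Ha [E | E]]].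
  - left. now exists a.
  - right. exists a. repeat split; [exact Ha | exact E |]. intros <-.
    exact (ultrafilter_not_both H alpha a alpha_ultrafilter (proj1 (LA_minimal a Ha)) Ah).
Qed.

End PrincipalUltrafilter.

Lemma principal_ultrafilter_eq_pi_set (H : PocSet) (alpha : H -> Prop) :
  omega_dimensional H -> (exists p : H, proper H p) ->
  ultrafilter H alpha -> principal H alpha ->
  exists A, maximal_transverse H A /\ forall h, alpha h <-> pi_set H A h.
Proof.
  intros Ho Hne Hu Hpr.
  destruct (exists_maximal_transverse_list H (minimal H alpha) Ho) as [LA [Lmin [Ltr Lmax]]].
  pose proof (minimal_family_maximal_transverse H alpha Hu Hpr LA Lmin Ltr Lmax Hne) as HA.
  exists (fun a => In a LA). split; [exact HA |].
  apply (ultrafilter_incl_eq H _ _ Hu (pi_set_ultrafilter H _ HA Hne)).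
  exact (principal_ultrafilter_sub_pi_set H alpha Hu Hpr LA Lmin Lmax).
Qed.

Theorem mainTheorem15 (H : PocSet) :
  discrete H -> omega_dimensional H ->
  (exists h : H, proper H h) ->
  (forall A : H -> Prop, maximal_transverse H A ->
     ultrafilter H (pi_set H A) /\ principal H (pi_set H A)) /\
  (forall alpha : H -> Prop, ultrafilter H alpha -> principal H alpha ->
     exists A : H -> Prop, maximal_transverse H A /\
       forall h, alpha h <-> pi_set H A h).
Proof.
  intros Hd Ho Hne. split.
  - intros A HA. split; [exact (pi_set_ultrafilter H A HA Hne) |].
    destruct HA as [Ap [At _]]. exact (pi_set_principal H A Ap At Hd Ho).
  - intros alpha Hu Hpr. exact (principal_ultrafilter_eq_pi_set H alpha Ho Hne Hu Hpr).
Qed.
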